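(* Let $W(\varphi)\setminus \downarrow{\mathfrak Z}=\varnothing$, $\Gamma\setminus \downarrow{\mathfrak Z}\neq\varnothing$ and $\sim=\Gamma\times\Gamma$. Then: 1. $\varnothing \neq P(\varphi)\subseteq \Gamma\setminus \downarrow{\mathfrak Z}\subseteq Q(\varphi)$; 2. for all $\theta\in P(\varphi)$ we have $\{\varphi^n(\theta):n\geq0\}=P(\varphi)$; 3. for $\theta\in P(\varphi)$: \[{\rm Eigen}(\sigma_{\varphi,\mathfrak{w}},V^\Gamma)=\left\{\begin{array}{lc} \{r\in F\setminus\{0\}: \mathfrak{w}_\theta\cdots\mathfrak{w}_{\varphi^{per(\theta)-1}(\theta)}=r^{per(\theta)}\}\:, & \varphi(\Gamma\setminus\mathfrak{Z})=\Gamma\:, \\ \{r\in F\setminus\{0\}: \mathfrak{w}_\theta\cdots\mathfrak{w}_{\varphi^{per(\theta)-1}(\theta)}=r^{per(\theta)}\}\cup\{0\}\:, & \text{otherwise}\:. \end{array}\right.\]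
   Context: $V$ is a vector space over a field $F$, $\Gamma$ a nonempty set, $\varphi:\Gamma\to\Gamma$ a self-map, and $\mathfrak{w}=(\mathfrak{w}_\alpha)_{\alpha\in\Gamma}\in F^\Gamma$. The weighted generalized shift is $\sigma_{\varphi,\mathfrak{w}}:V^\Gamma\to V^\Gamma$, $(x_\alpha)_{\alpha\in\Gamma}\mapsto(\mathfrak{w}_\alpha x_{\varphi(\alpha)})_{\alpha\in\Gamma}$. $\mathfrak{Z}:=\{\alpha\in\Gamma:\mathfrak{w}_\alpha=0\}$ and $\downarrow\mathfrak{Z}:=\bigcup_{n\geq0}\varphi^{-n}(\mathfrak{Z})$. The relation $\sim$ on $\Gamma$ is defined by $\alpha\sim\beta$ iff there exist $n,m\geq1$ with $\varphi^n(\alpha)=\varphi^m(\beta)$. A point $a$ is wandering if $\{\varphi^n(a)\}_{n\geq1}$ is one-to-one, quasi-periodic if $\varphi^n(a)=\varphi^m(a)$ for some $n>m\geq1$, periodic if $\varphi^n(a)=a$ for some $n\geq1$; $W(\varphi),Q(\varphi),P(\varphi)$ denote the sets of wandering, quasi-periodic, periodic points, and for $\alpha\in P(\varphi)$, $per(\alpha)=\min\{n\geq1:\varphi^n(\alpha)=\alpha\}$. For a linear map $T:W\to W$, ${\rm Eigen}(T,W)$ is the set of all $r\in F$ such that $T(x)=rx$ for some nonzero $x\in W$. *)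

From HB Require Import structures.
From mathcomp Require Import all_boot all_order all_algebra.
Set Implicit Arguments. Unset Strict Implicit. Unset Printing Implicit Defensive.
Import GRing.Theory.
Local Open Scope ring_scope.

Section WGS.
Variables (F : fieldType) (V : lmodType F) (Gamma : Type).
Variables (phi : Gamma -> Gamma) (w : Gamma -> F).

Definition wshift (x : Gamma -> V) : Gamma -> V := fun a => w a *: x (phi a).

Definition Zset (a : Gamma) : Prop := w a = 0.
Definition downZ (a : Gamma) : Prop := exists n : nat, Zset (iter n phi a).

Definition simrel (a b : Gamma) : Prop :=
  exists n m : nat, (1 <= n)%N /\ (1 <= m)%N /\ iter n phi a = iter m phi b.

Definition wandering (a : Gamma) : Prop :=
  forall n m : nat, (1 <= n)%N -> (1 <= m)%N -> iter n phi a = iter m phi a -> n = m.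
Definition quasi_periodic (a : Gamma) : Prop :=
  exists n m : nat, (m < n)%N /\ (1 <= m)%N /\ iter n phi a = iter m phi a.
Definition periodic (a : Gamma) : Prop :=
  exists n : nat, (1 <= n)%N /\ iter n phi a = a.

Definition is_per (a : Gamma) (p : nat) : Prop :=
  [/\ (1 <= p)%N, iter p phi a = a &
      forall k : nat, (1 <= k)%N -> iter k phi a = a -> (p <= k)%N].

Definition Eigen (r : F) : Prop :=
  exists x : Gamma -> V, x <> (fun _ => 0) /\ wshift x = (fun a => r *: x a).

Definition image_nonZ_full : Prop :=
  forall b : Gamma, exists a : Gamma, ~ Zset a /\ phi a = b.

End WGS.

From HB Require Import structures.
From mathcomp Require Import all_boot all_order all_algebra.
From Stdlib Require Import Classical ClassicalEpsilon FunctionalExtensionality.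
Set Implicit Arguments.
Unset Strict Implicit.
Unset Printing Implicit Defensive.

Import GRing.Theory.
Local Open Scope ring_scope.

(* All points being ~-related, every point eventually lands on any periodic
   point.  Hence there is a single cycle; it lies outside downZ because some
   point does, and it exists because points outside downZ are not
   wandering, hence quasi-periodic.  An eigenvector x for r != 0 satisfies
   w_a x(phi a) = r x(a), so its values are determined by x(theta) through
   products of the normalised weights w/r along orbits: one turn around the
   cycle forces w_theta ... w_(phi^(p-1) theta) = r^p, and conversely this
   makes those products independent of the path, which defines an
   eigenvector.  For r = 0 the eigenvectors are the nonzero x supported on
   points with no preimage outside Z. *)

Section Orbits.
Variables (T : Type) (f : T -> T).

Lemma iter_period_mul p x k : iter p f x = x -> iter (k * p) f x = x.
Proof. by move=> fpx; rewrite iterM; apply: iter_fix. Qed.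

Lemma is_per_dvd x p d : is_per f x p -> iter d f x = x -> (p %| d)%N.
Proof.
move=> [p_gt0 fpx p_min] fdx.
have fmodx : iter (d %% p) f x = x.
  by rewrite -[in RHS]fdx {2}(divn_eq d p) addnC iterD iter_period_mul.
apply: contraT; rewrite /dvdn -lt0n => mod_gt0.
by move: (p_min _ mod_gt0 fmodx); rewrite leqNgt ltn_pmod.
Qed.

Lemma periodic_iter x n : periodic f x -> periodic f (iter n f x).
Proof. by move=> [p [p_gt0 fpx]]; exists p; rewrite -iterD addnC iterD fpx. Qed.

Lemma simrel_periodic_reach a b :
  periodic f a -> simrel f b a -> exists n, iter n f b = a.
Proof.
move=> [[|q] [// _ fqa]] [n [m [_ [_ fnb]]]].
exists (m * q + n)%N.
by rewrite iterD fnb -iterD addnC -mulnS iter_period_mul.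
Qed.

Lemma not_wandering_quasi_periodic a : ~ wandering f a -> quasi_periodic f a.
Proof.
move=> not_wand; apply: NNPP => not_qp; apply: not_wand => n m n_gt0 m_gt0 fnm.
apply: NNPP => n_neq_m; apply: not_qp.
case: (ltngtP n m) => [lt_nm|lt_mn|eq_nm]; last by case: (n_neq_m eq_nm).
- by exists m, n.
- by exists n, m.
Qed.

Lemma quasi_periodic_iter_periodic a :
  quasi_periodic f a -> exists m, periodic f (iter m f a).
Proof.
move=> [n [m [lt_mn [_ fnm]]]]; exists m, (n - m)%N.
by rewrite subn_gt0 -iterD subnK // ltnW.
Qed.

End Orbits.

Section OrbitProducts.
Variables (R : comPzSemiRingType) (T : Type) (f : T -> T) (u : T -> R).

Lemma prod_iterD n k a : \prod_(i < n + k) u (iter i f a) =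
  \prod_(i < n) u (iter i f a) * \prod_(i < k) u (iter i f (iter n f a)).
Proof.
rewrite big_split_ord; congr (_ * _).
by apply: eq_bigr => i _; rewrite /= addnC iterD.
Qed.

Lemma prod_iterS n a :
  \prod_(i < n.+1) u (iter i f a) = u a * \prod_(i < n) u (iter i f (f a)).
Proof. by rewrite -add1n prod_iterD big_ord1. Qed.

Lemma prod_iter_period p x k : iter p f x = x ->
  \prod_(i < k * p) u (iter i f x) = (\prod_(i < p) u (iter i f x)) ^+ k.
Proof.
move=> fpx; elim: k => [|k IHk]; first by rewrite big_ord0.
by rewrite mulSn prod_iterD fpx IHk exprS.
Qed.

End OrbitProducts.

Section WeightedShift.
Variables (F : fieldType) (V : lmodType F) (Gamma : Type).
Variables (phi : Gamma -> Gamma) (w : Gamma -> F).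

Lemma downZ_iter a n : downZ phi w (iter n phi a) -> downZ phi w a.
Proof. by move=> [k Zk]; exists (k + n)%N; rewrite iterD. Qed.

Lemma exists_nonzero_value (x : Gamma -> V) :
  x <> (fun _ => 0) -> exists b, x b != 0.
Proof.
move=> x_neq0; apply: NNPP => no_b; apply: x_neq0.
apply: functional_extensionality => b; apply/eqP/negPn/negP => xb_neq0.
by apply: no_b; exists b.
Qed.

Lemma wshift_eigen_iter (x : Gamma -> V) r :
  wshift phi w x = (fun a => r *: x a) -> forall n a,
  (\prod_(i < n) w (iter i phi a)) *: x (iter n phi a) = r ^+ n *: x a.
Proof.
move=> eigx; elim=> [|n IHn] a; first by rewrite big_ord0 !scale1r.
rewrite prod_iterS -scalerA iterSr IHn scalerA mulrC -scalerA.
by rewrite -[w a *: _]/(wshift phi w x a) eigx scalerA -exprSr.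
Qed.

Lemma Eigen0_iff : (exists v : V, v != 0) ->
  Eigen V phi w 0 <-> ~ image_nonZ_full phi w.
Proof.
move=> [v v_neq0]; split.
  move=> [x [x_neq0 eigx]] onto.
  have [b xb_neq0] := exists_nonzero_value x_neq0.
  have [a [wa_neq0 phiab]] := onto b.
  have /eqP := congr1 (fun y => y a) eigx.
  by rewrite /wshift phiab scale0r scaler_eq0 (negbTE xb_neq0) orbF => /eqP.
move=> not_onto.
have [b b_noZpre] : exists b, forall a, phi a = b -> w a = 0.
  apply: NNPP => no_b; apply: not_onto => b; apply: NNPP => no_pre.
  by apply: no_b; exists b => a phiab; apply: NNPP => wa_neq0; apply: no_pre; exists a.
exists (fun a => if excluded_middle_informative (a = b) then v else 0); split.
  move/(congr1 (fun y => y b)) => /=.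
  by case: excluded_middle_informative => [_ /eqP|//]; rewrite (negbTE v_neq0).
apply: functional_extensionality => a; rewrite /wshift scale0r.
destruct (excluded_middle_informative (phi a = b)) as [phiab|]; last exact: scaler0.
by rewrite b_noZpre // scale0r.
Qed.

Section Cycle.
Variables (theta : Gamma) (p : nat).
Hypothesis theta_period : is_per phi theta p.
Hypothesis reach_theta : forall a, exists n, iter n phi a = theta.

Lemma Eigen_cycle_weight r : r != 0 -> Eigen V phi w r ->
  \prod_(i < p) w (iter i phi theta) = r ^+ p.
Proof.
move=> r_neq0 [x [x_neq0 eigx]].
have [b xb_neq0] := exists_nonzero_value x_neq0.
have [n fnb] := reach_theta b.
have xtheta_neq0 : x theta != 0.
  apply: contraNneq xb_neq0 => xtheta0.
  have /esym/eqP := wshift_eigen_iter eigx n b.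
  by rewrite fnb xtheta0 scaler0 scaler_eq0 expf_eq0 (negbTE r_neq0) andbF; apply.
have /eqP := wshift_eigen_iter eigx p theta.
case: theta_period => _ -> _.
by rewrite -subr_eq0 -scalerBl scaler_eq0 (negbTE xtheta_neq0) orbF subr_eq0 => /eqP.
Qed.

Section Construction.
Variables (r : F) (v : V).
Hypotheses (r_neq0 : r != 0) (v_neq0 : v != 0).
Hypothesis cycle_weight : \prod_(i < p) w (iter i phi theta) = r ^+ p.

Let nw b := w b / r.
Let coef a n := \prod_(i < n) nw (iter i phi a).

(* Two paths from a to theta differ by whole turns around the cycle, and the
   normalised weights multiply to 1 along each turn. *)
Lemma coef_path_indep a n m :
  iter n phi a = theta -> iter m phi a = theta -> coef a n = coef a m.
Proof.
wlog le_nm : n m / (n <= m)%N.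
  by move=> indep fna fma; case: (leqP n m) => [|/ltnW] /indep ->.
move=> fna fma.
have /dvdnP [k mn_eq] : (p %| m - n)%N.
  by apply: (is_per_dvd theta_period); rewrite -{1}fna -iterD subnK.
have cycle_nw : \prod_(i < p) nw (iter i phi theta) = 1.
  by rewrite prodf_div cycle_weight prodr_const card_ord divff // expf_neq0.
have [_ fptheta _] := theta_period.
rewrite /coef -(subnKC le_nm) prod_iterD fna mn_eq prod_iter_period //.
by rewrite cycle_nw expr1n mulr1.
Qed.

Let dist a := proj1_sig (constructive_indefinite_description _ (reach_theta a)).

Let iter_dist a : iter (dist a) phi a = theta.
Proof. exact: proj2_sig (constructive_indefinite_description _ (reach_theta a)). Qed.

Lemma cycle_weight_Eigen : Eigen V phi w r.
Proof.
exists (fun a => coef a (dist a) *: v); split.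
  move/(congr1 (fun y => y theta)) => /eqP.
  by rewrite -(coef_path_indep (n := 0)) // /coef big_ord0 scale1r (negbTE v_neq0).
apply: functional_extensionality => a; rewrite /wshift /= !scalerA.
have fSa : iter (dist (phi a)).+1 phi a = theta by rewrite iterSr.
rewrite (coef_path_indep (iter_dist a) fSa) /coef prod_iterS.
by rewrite /nw mulrA mulrCA divff // mulr1.
Qed.

End Construction.

Lemma Eigen_nonzero_iff r : (exists v : V, v != 0) -> r != 0 ->
  Eigen V phi w r <-> \prod_(i < p) w (iter i phi theta) = r ^+ p.
Proof.
move=> [v v_neq0] r_neq0; split; first exact: Eigen_cycle_weight.
exact: cycle_weight_Eigen r_neq0 v_neq0.
Qed.

End Cycle.

End WeightedShift.

Theorem lemma2p7 (F : fieldType) (V : lmodType F) (Gamma : Type)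
  (phi : Gamma -> Gamma) (w : Gamma -> F)
  (HV : exists v : V, v != 0)
  (Hwand : forall a, wandering phi a -> downZ phi w a)
  (Hne : exists a, ~ downZ phi w a)
  (Hsim : forall a b, simrel phi a b) :
  [/\ (* 1 *)
      (exists t, periodic phi t)
      /\ (forall a, periodic phi a -> ~ downZ phi w a)
      /\ (forall a, ~ downZ phi w a -> quasi_periodic phi a),
      (* 2 *)
      (forall t, periodic phi t ->
         forall a, (exists n : nat, iter n phi t = a) <-> periodic phi a) &
      (* 3 *)
      (forall t p, periodic phi t -> is_per phi t p ->
         (image_nonZ_full phi w ->
            forall r : F, Eigen V phi w r <->
              (r != 0 /\ \prod_(i < p) w (iter i phi t) = r ^+ p))
         /\
         (~ image_nonZ_full phi w ->
            forall r : F, Eigen V phi w r <->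
              ((r != 0 /\ \prod_(i < p) w (iter i phi t) = r ^+ p) \/ r = 0)))].
Proof.
have qp_out : forall a, ~ downZ phi w a -> quasi_periodic phi a.
  by move=> a out; apply: not_wandering_quasi_periodic => /Hwand.
have [a0 a0_out] := Hne.
split; [split; [|split] | |] => //.
- have [m m_per] := quasi_periodic_iter_periodic (qp_out _ a0_out).
  by exists (iter m phi a0).
- move=> a a_per a_in; apply: a0_out.
  have [n fna0] := simrel_periodic_reach a_per (Hsim a0 a).
  by apply: (downZ_iter (n := n)); rewrite fna0.
- move=> t t_per a; split=> [[n <-]|a_per]; first exact: periodic_iter.
  exact: simrel_periodic_reach a_per (Hsim t a).
move=> t p t_per t_is_per.
have reach_t a : exists n, iter n phi a = t.
  exact: simrel_periodic_reach t_per (Hsim a t).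
split=> [onto|not_onto] r; have [->|r_neq0] := eqVneq r 0.
- by rewrite Eigen0_iff //; split=> [/(_ onto)|[]] //; rewrite eqxx.
- by rewrite (Eigen_nonzero_iff w t_is_per reach_t HV r_neq0); split=> [|[]].
- by rewrite Eigen0_iff //; split=> // _; right.
- rewrite (Eigen_nonzero_iff w t_is_per reach_t HV r_neq0).
  split=> [|[[]|r0]] //; first by left.
  by rewrite r0 eqxx in r_neq0.
Qed.
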